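(* Let $k=\mathbb R$ or $\mathbb C$, let $(E,g)$ be a finite-dimensional inner product vector space over $k$, let $f\in\operatorname{End}_k(E)$, and let $\mathcal H_f=\{H_1,\dots,H_n\}$ be a family of $f$-invariant subspaces of $E$ with $E=H_1\oplus\dots\oplus H_n$ and $H_i\subseteq\big[\sum_{j\ne i}H_j\big]^\perp$ for all $i\in\{1,\dots,n\}$. Then $f^+_{\mathcal H_f}=f^\dagger$.
   Context: An inner product is linear in the first argument, conjugate-symmetric and positive definite; $U^\perp=\{e\in E:g(u,e)=0\ \forall u\in U\}$. For $f\in\operatorname{End}_k(E)$, its Moore-Penrose inverse $f^\dagger\in\operatorname{End}_k(E)$ is the linear map equal to $(f|_{[\operatorname{Ker} f]^\perp})^{-1}$ on $\operatorname{Im} f$ and to $0$ on $[\operatorname{Im} f]^\perp$. With $f_i=f|_{H_i}\in\operatorname{End}_k(H_i)$ and $H_i$ carrying the restricted inner product, $f^+_{\mathcal H_f}$ is the unique endomorphism of $E$ with $f^+_{\mathcal H_f}|_{H_i}=f_i^\dagger$ for each $i$. *)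

From HB Require Import structures.
From mathcomp Require Import all_boot all_order all_algebra.
From mathcomp Require Import reals.
From mathcomp Require Import complex.
From Stdlib Require Import ClassicalEpsilon.
Set Implicit Arguments. Unset Strict Implicit. Unset Printing Implicit Defensive.
Import Order.TTheory GRing.Theory Num.Theory.
Local Open Scope ring_scope.

(* Inner products on a (finite-dimensional) vector space E over a number
   field K, where [conj] is the conjugation of K (identity for k = R,
   complex conjugation for k = C). *)
Definition is_inner_product (K : numFieldType) (conj : K -> K)
  (E : vectType K) (g : E -> E -> K) : Prop :=
  [/\ (forall (a : K) (x y z : E), g (a *: x + y) z = a * g x z + g y z),
      (forall x y : E, g y x = conj (g x y))
    & (forall x : E, x != 0 -> 0 < g x x)].

Definition orth (K : numFieldType) (E : vectType K) (g : E -> E -> K)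
  (U : {vspace E}) : E -> Prop :=
  fun e => forall u, u \in U -> g u e = 0.

(* h is the Moore-Penrose inverse of f in the sense of the paper:
   h equals (f|_{[Ker f]^perp})^{-1} on Im f, and 0 on [Im f]^perp. *)
Definition is_MP_inverse (K : numFieldType) (E : vectType K)
  (g : E -> E -> K) (f h : 'End(E)) : Prop :=
  (forall y, y \in limg f -> orth g (lker f) (h y) /\ f (h y) = y) /\
  (forall y, orth g (limg f) y -> h y = 0).

Definition MPinv (K : numFieldType) (E : vectType K)
  (g : E -> E -> K) (f : 'End(E)) : 'End(E) :=
  epsilon (inhabits 0) (is_MP_inverse g f).

Definition restr_end (K : numFieldType) (E : vectType K) (H : {vspace E})
  (f : 'End(E)) : 'End(subvs_of H) :=
  linfun (fun x : subvs_of H => vsproj H (f (vsval x))).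

Definition restr_form (K : numFieldType) (E : vectType K) (H : {vspace E})
  (g : E -> E -> K) : subvs_of H -> subvs_of H -> K :=
  fun x y => g (vsval x) (vsval y).

Arguments restr_end {K E} H f.
Arguments restr_form {K E} H g.

From HB Require Import structures.
From mathcomp Require Import all_boot all_order all_algebra.
From mathcomp Require Import reals.
From mathcomp Require Import complex.
From Stdlib Require Import ClassicalEpsilon.
Set Implicit Arguments. Unset Strict Implicit. Unset Printing Implicit Defensive.
Import Order.TTheory GRing.Theory Num.Theory.
Local Open Scope ring_scope.

(* Because f preserves each H_i and the H_i are mutually orthogonal, the
   kernel of f, its image and the orthogonal complement of its image all
   split along E = H_1 (+) ... (+) H_n into the corresponding objects for the
   f_i.  Hence the blockwise map f^+ satisfies the two conditions defining
   f^dagger, and these conditions determine f^dagger uniquely: a map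
   satisfying them is pinned down on Im f and on [Im f]^perp, which together
   span E.  Since [MPinv] is defined by choice, existence is needed as well;
   the witness is f^-1 framed by the orthogonal projections onto Im f and
   [Ker f]^perp. *)

Lemma linfunE (K : fieldType) (aT rT : vectType K) (fn : aT -> rT) :
  linear fn -> linfun fn =1 fn.
Proof.
move=> fn_lin x.
pose F : {linear aT -> rT} :=
  HB.pack fn (GRing.isSemilinear.Build K aT rT _ fn (GRing.semilinear_linear fn_lin)).
exact: (lfunE F x).
Qed.

Lemma daddv_pi_eq0 (K : fieldType) (E : vectType K) (U V : {vspace E}) v :
  (U :&: V = 0)%VS -> v \in V -> daddv_pi U V v = 0.
Proof.
move=> UV0 Vv; apply: (addIr v); rewrite add0r -[RHS](daddv_pi_add UV0).
  by rewrite (daddv_pi_id _ Vv) // capvC.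
by rewrite (subvP (addvSr U V)).
Qed.

Lemma restr_endE (K : numFieldType) (E : vectType K) (H : {vspace E})
    (f : 'End(E)) (w : subvs_of H) :
  (f @: H <= H)%VS -> vsval (restr_end H f w) = f (vsval w).
Proof.
move=> fH; rewrite linfunE ?vsprojK ?(subvP fH) ?memv_img ?subvsP //.
by move=> a u v; rewrite !linearP.
Qed.

Section InnerProduct.
Variables (K : numFieldType) (conj : K -> K) (E : vectType K) (g : E -> E -> K).
Hypothesis conj0 : conj 0 = 0.
Hypothesis g_ip : is_inner_product conj g.

Lemma ip0l z : g 0 z = 0.
Proof.
have [g_lin _ _] := g_ip; apply: (addrI (g 0 z)).
by have := g_lin 1 0 0 z; rewrite scale1r addr0 mul1r => <-; rewrite addr0.
Qed.

Lemma ipDl x y z : g (x + y) z = g x z + g y z.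
Proof. by have [g_lin _ _] := g_ip; have := g_lin 1 x y z; rewrite scale1r mul1r. Qed.

Lemma ipZl a x z : g (a *: x) z = a * g x z.
Proof. by have [g_lin _ _] := g_ip; rewrite -[_ *: x]addr0 g_lin ip0l addr0. Qed.

Lemma ip_suml (I : finType) (P : pred I) (F : I -> E) z :
  g (\sum_(i | P i) F i) z = \sum_(i | P i) g (F i) z.
Proof. by elim/big_rec2: _ => [|i a b _ <-]; rewrite ?ip0l ?ipDl. Qed.

Lemma ip_eq0C x y : g x y = 0 -> g y x = 0.
Proof. by have [_ gC _] := g_ip; move=> gxy0; rewrite gC gxy0. Qed.

Lemma ip_self_eq0 x : g x x = 0 -> x = 0.
Proof.
have [_ _ g_pos] := g_ip; move=> gxx0; apply/eqP; apply: contraT => /g_pos.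
by rewrite gxx0 ltxx.
Qed.

(* [g] is only known to be linear in its first argument, so U^perp is cut out
   by the linear conditions [g e b = 0] for [b] in a basis of [U]. *)
Definition gram_row (U : {vspace E}) (e : E) : 'rV[K]_(\dim U) :=
  \row_k g e (vbasis U)`_k.

Lemma gram_row_is_linear U : linear (gram_row U).
Proof.
by move=> a x y; apply/rowP => k; have [g_lin _ _] := g_ip; rewrite !mxE g_lin.
Qed.

Definition orthv (U : {vspace E}) : {vspace E} := lker (linfun (gram_row U)).

Lemma orthvP U e : reflect (orth g U e) (e \in orthv U).
Proof.
rewrite memv_ker linfunE; last exact: gram_row_is_linear.
apply: (iffP eqP) => [e_U u Uu | e_U].
  rewrite (coord_vbasis Uu) ip_suml big1 // => k _.
  rewrite ipZl; apply/eqP; rewrite mulf_eq0; apply/orP; right; apply/eqP.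
  by apply: ip_eq0C; move/rowP: e_U => /(_ k); rewrite !mxE.
apply/rowP => k; rewrite !mxE; apply: ip_eq0C; apply: e_U.
by apply: vbasis_mem; apply: mem_nth; rewrite size_tuple.
Qed.

Lemma capv_orthv U : (U :&: orthv U = 0)%VS.
Proof.
apply/vspaceP => x; rewrite memv_cap memv0.
apply/andP/eqP => [[Ux /orthvP x_U] | ->]; last by rewrite !rpred0.
exact/ip_self_eq0/x_U.
Qed.

Lemma addv_orthv U : (U + orthv U = fullv)%VS.
Proof.
apply/eqP; rewrite eqEdim subvf /= dimv_disjoint_sum ?capv_orthv //.
have := limg_ker_dim (linfun (gram_row U)) fullv; rewrite capfv dimvf => <-.
rewrite addnC leq_add2r (leq_trans (dimvS (subvf _))) //.
by rewrite dimvf dim_matrix mul1r.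
Qed.

Lemma memv_add_orthv U y : y \in (U + orthv U)%VS.
Proof. by rewrite addv_orthv memvf. Qed.

Lemma MP_inverse_exists f : exists h, is_MP_inverse g f h.
Proof.
pose h := (daddv_pi (orthv (lker f)) (lker f) \o f^-1
             \o daddv_pi (limg f) (orthv (limg f)))%VF.
exists h; split => [y f_y | y /orthvP y_f]; rewrite /h !comp_lfunE; last first.
  by rewrite (@daddv_pi_eq0 _ _ (limg f) (orthv (limg f))) ?capv_orthv // !linear0.
rewrite (@daddv_pi_id _ _ (limg f) (orthv (limg f))) ?capv_orthv //.
set x := (f^-1)%VF y.
have kerC : (orthv (lker f) :&: lker f = 0)%VS by rewrite capvC capv_orthv.
split; first by apply/orthvP; apply: memv_pi.
have := memv_pi (lker f) (orthv (lker f)) x; rewrite memv_ker => /eqP fx0.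
have x_split : daddv_pi (orthv (lker f)) (lker f) x
               + daddv_pi (lker f) (orthv (lker f)) x = x.
  by apply: daddv_pi_add kerC _; rewrite addvC memv_add_orthv.
have fx : f x = y := limg_lfunVK f_y.
by rewrite -[RHS]fx -{2}x_split linearD /= fx0 addr0.
Qed.

Lemma MP_inverse_unique f h1 h2 :
  is_MP_inverse g f h1 -> is_MP_inverse g f h2 -> h1 = h2.
Proof.
move=> [h1_img h1_orth] [h2_img h2_orth]; apply/lfunP => y.
rewrite -(daddv_pi_add (capv_orthv (limg f)) (memv_add_orthv _ y)).
set y1 := daddv_pi _ _ y; set y2 := daddv_pi _ _ y.
have /orthvP y2_f : y2 \in orthv (limg f) by apply: memv_pi.
have f_y1 : y1 \in limg f by apply: memv_pi.
rewrite !linearD /= (h1_orth _ y2_f) (h2_orth _ y2_f) !addr0.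
apply/eqP; rewrite -subr_eq0.
have [/orthvP h1y1_perp fh1y1] := h1_img _ f_y1.
have [/orthvP h2y1_perp fh2y1] := h2_img _ f_y1.
have : h1 y1 - h2 y1 \in (lker f :&: orthv (lker f))%VS.
  by rewrite memv_cap memv_ker linearB /= fh1y1 fh2y1 subrr eqxx rpredB.
by rewrite capv_orthv memv0.
Qed.

Lemma MPinvP f : is_MP_inverse g f (MPinv g f).
Proof. by apply: epsilon_spec; apply: MP_inverse_exists. Qed.

Lemma MPinv_unique f h : is_MP_inverse g f h -> h = MPinv g f.
Proof. by move/MP_inverse_unique; apply; apply: MPinvP. Qed.

Lemma restr_form_is_inner_product H : is_inner_product conj (restr_form H g).
Proof.
have [g_lin gC g_pos] := g_ip; split; rewrite /restr_form.
- by move=> a x y z; rewrite linearP /= g_lin.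
- by move=> x y; rewrite gC.
- move=> x x_neq0; apply: g_pos; apply: contra x_neq0 => /eqP x0.
  by apply/eqP/subvs_inj; rewrite x0 linear0.
Qed.

End InnerProduct.

Section OrthogonalBlocks.
Variables (K : numFieldType) (conj : K -> K) (E : vectType K) (g : E -> E -> K).
Hypothesis conj0 : conj 0 = 0.
Hypothesis g_ip : is_inner_product conj g.
Variables (f : 'End(E)) (n : nat) (H : 'I_n -> {vspace E}).
Hypothesis f_H : forall i, (f @: H i <= H i)%VS.
Hypothesis H_direct : directv (\sum_(i < n) H i)%VS.
Hypothesis H_full : (\sum_(i < n) H i)%VS = fullv.
Hypothesis H_orth :
  forall i x, x \in H i -> orth g (\sum_(j < n | j != i) H j)%VS x.

Lemma memv_block_f i x : x \in H i -> f x \in H i.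
Proof. by move=> Hx; rewrite (subvP (f_H i)) ?memv_img. Qed.

Lemma blocks_decomp x :
  exists2 xs : 'I_n -> E, (forall i, xs i \in H i) & x = \sum_(i < n) xs i.
Proof.
have : x \in (\sum_(i < n) H i)%VS by rewrite H_full memvf.
by case/memv_sumP => xs Hxs ->; exists xs => // i; apply: Hxs.
Qed.

Lemma ip_sum_blocks (xs : 'I_n -> E) i x :
  (forall k, xs k \in H k) -> x \in H i -> g (\sum_(k < n) xs k) x = g (xs i) x.
Proof.
move=> Hxs Hx; rewrite (ip_suml g_ip) (bigD1 i) //= big1 ?addr0 // => k k_i.
by apply: H_orth Hx _ _; rewrite (subvP (sumv_sup k _ (subvv _))).
Qed.

Lemma lker_blocks (us : 'I_n -> E) i :
  (forall k, us k \in H k) -> \sum_(k < n) us k \in lker f -> f (us i) = 0.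
Proof.
move=> Hus; rewrite memv_ker linear_sum => /eqP fus0.
by apply: (directv_sum_independent H_direct) fus0 _ _ => // k _; apply/memv_block_f.
Qed.

Variable fplus : 'End(E).
Hypothesis fplus_blocks : forall i (x : subvs_of (H i)),
  fplus (vsval x) = vsval (MPinv (restr_form (H i) g) (restr_end (H i) f) x).

Let restr_MPinvP i :=
  MPinvP conj0 (restr_form_is_inner_product g_ip (H i)) (restr_end (H i) f).

Lemma fplus_block_img i x : x \in H i ->
  [/\ fplus (f x) \in H i, f (fplus (f x)) = f x
    & forall u, u \in H i -> f u = 0 -> g u (fplus (f x)) = 0].
Proof.
move=> Hx; set x' := vsproj (H i) x.
have fxE : f x = vsval (restr_end (H i) f x') by rewrite restr_endE // vsprojK.
have [hP _] := restr_MPinvP i.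
have [h_ker h_inv] := hP _ (memv_img (restr_end (H i) f) (memvf x')).
rewrite fxE fplus_blocks -restr_endE // h_inv; split=> // [|u Hu fu0].
  exact: subvsP.
have := h_ker (vsproj (H i) u); rewrite /restr_form vsprojK //; apply.
rewrite memv_ker; apply/eqP/subvs_inj.
by rewrite restr_endE // vsprojK // fu0 linear0.
Qed.

Lemma fplus_block_orth i y :
  y \in H i -> (forall v, v \in H i -> g (f v) y = 0) -> fplus y = 0.
Proof.
move=> Hy y_f; have [_ h_orth] := restr_MPinvP i.
rewrite -(vsprojK Hy) fplus_blocks h_orth ?linear0 // => w /memv_imgP [v _ ->].
by rewrite /restr_form vsprojK // restr_endE ?y_f ?subvsP.
Qed.

Lemma fplus_is_MP_inverse : is_MP_inverse g f fplus.
Proof.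
split=> [y /memv_imgP [x _ ->] | y y_f].
  have [xs Hxs ->] := blocks_decomp x.
  have fplusP i := fplus_block_img (Hxs i).
  rewrite linear_sum [fplus _]linear_sum; split.
    apply/(orthvP conj0 g_ip)/rpred_sum => j _; apply/(orthvP conj0 g_ip).
    move=> u u_ker; have [us Hus uE] := blocks_decomp u.
    have [fplus_Hj _ fplus_ker] := fplusP j.
    rewrite uE (ip_sum_blocks Hus fplus_Hj) fplus_ker //.
    by apply: lker_blocks Hus _; rewrite -uE.
  by rewrite linear_sum; apply: eq_bigr => i _; case: (fplusP i).
have [ys Hys yE] := blocks_decomp y.
rewrite yE linear_sum big1 // => i _; apply: fplus_block_orth (Hys i) _ => v Hv.
apply: (ip_eq0C conj0 g_ip); rewrite -(ip_sum_blocks Hys (memv_block_f Hv)) -yE.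
by apply: (ip_eq0C conj0 g_ip); apply: y_f; apply: memv_img; apply: memvf.
Qed.

Theorem MPinv_orthogonal_blocks : fplus = MPinv g f.
Proof. exact: (MPinv_unique conj0 g_ip fplus_is_MP_inverse). Qed.

End OrthogonalBlocks.

Theorem proposition3p9 (R : realType) :
  (forall (E : vectType R) (g : E -> E -> R) (f : 'End(E)) (n : nat)
          (H : 'I_n -> {vspace E}) (fplus : 'End(E)),
      is_inner_product id g ->
      (forall i, (f @: H i <= H i)%VS) ->
      directv (\sum_(i < n) H i)%VS ->
      (\sum_(i < n) H i)%VS = fullv ->
      (forall i x, x \in H i -> orth g (\sum_(j < n | j != i) H j)%VS x) ->
      (forall i (x : subvs_of (H i)),
          fplus (vsval x) = vsval (MPinv (restr_form (H i) g) (restr_end (H i) f) x)) ->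
      fplus = MPinv g f)
  /\
  (forall (E : vectType R[i]) (g : E -> E -> R[i]) (f : 'End(E)) (n : nat)
          (H : 'I_n -> {vspace E}) (fplus : 'End(E)),
      is_inner_product Num.conj g ->
      (forall i, (f @: H i <= H i)%VS) ->
      directv (\sum_(i < n) H i)%VS ->
      (\sum_(i < n) H i)%VS = fullv ->
      (forall i x, x \in H i -> orth g (\sum_(j < n | j != i) H j)%VS x) ->
      (forall i (x : subvs_of (H i)),
          fplus (vsval x) = vsval (MPinv (restr_form (H i) g) (restr_end (H i) f) x)) ->
      fplus = MPinv g f).
Proof.
split=> E g f n H fplus g_ip f_H H_direct H_full H_orth fplus_blocks.
  exact: (MPinv_orthogonal_blocks (erefl (0 : R)) g_ip
            f_H H_direct H_full H_orth fplus_blocks).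
exact: (MPinv_orthogonal_blocks (conjC0 _) g_ip
          f_H H_direct H_full H_orth fplus_blocks).
Qed.
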